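(* Let $n\ge2$, $(a,b)\in\Omega_n$, and $L=L^{(n)}_{(a,b)}$. Then $H_L=\langle\omega^{2ab}\rangle$, the cyclic group $C_{n/ab}$ of order $n/(ab)$, so the base group for $L$ is $G=G_{\mathcal{D}_n}(L^{(n)}_{(a,b)},C_{n/ab})$, and $$|G|=\frac{8n^2}{ab},\qquad G \text{ has } \frac{2n}{ab}+\frac{2n}{a}+\frac{2n}{b}-2 \text{ reflections}.$$ Moreover, the base groups obtained for different $(a,b)\in\Omega_n$ are all different.
   Context: $\mathbb{H}$ is the real quaternion algebra with basis $1,i,j,k$. For $n\ge2$ let $\omega:=\cos(\pi/n)+i\sin(\pi/n)\in\mathbb{H}$ and $\mathcal{D}_n:=\langle\omega,j\rangle$ (dicyclic group of order $4n$); for $r\mid 2n$, $C_r:=\langle\omega^{2n/r}\rangle$. $\Omega_n:=\{(a,b):1\le a\le b\le n,\ a\mid n,\ b\mid n,\ \gcd(a,b)=1\}$. For $x,y$ in a group put $x\circ y:=xy^{-1}x$, and let $L(X)$ be the closure of a set $X$ under $\circ$; $L^{(n)}_{(a,b)}:=L(\{1,\omega^a,j,\omega^bj\})$ (a reflection system for $\mathcal{D}_n$, i.e. a subset generating $\mathcal{D}_n$, closed under $\circ$ and containing $1$). For $b\in\mathcal{D}_n$ let $M_b=\begin{pmatrix}0&b\\ b^{-1}&0\end{pmatrix}$. For a reflection system $L$, $H_L:=\{h:\mathrm{diag}(h,1)\in\langle M_b:b\in L\rangle\}$. For $H\trianglelefteq K$ with $H\subseteq L$, $LH=L$, $G(K,L,H)$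 is the subgroup of $U(\mathbb{H}^2)$ generated by $\mathrm{diag}(h,1),\mathrm{diag}(1,h)$ ($h\in H$) and $M_b$ ($b\in L$); it is in canonical form, denoted $G_K(L,H)$, if $\{b: M_b\in G(K,L,H)\}=L$. The base group for $L$ is $G_K(L,H_L)$. A reflection is a non-identity $g\in U(\mathbb{H}^2)$ with $\operatorname{rank}(g-I)=1$. *)

From HB Require Import structures.
From mathcomp Require Import all_boot all_order all_algebra.
From mathcomp Require Import boolp classical_sets reals trigo.
Set Implicit Arguments. Unset Strict Implicit. Unset Printing Implicit Defensive.
Import Order.TTheory GRing.Theory Num.Theory.
Local Open Scope classical_set_scope.
Local Open Scope ring_scope.

Record quat (R : realType) := Quat { q0 : R; q1 : R; q2 : R; q3 : R }.

Definition quat_tuple (R : realType) (q : quat R) : R * R * R * R :=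
  (q0 q, q1 q, q2 q, q3 q).
Definition tuple_quat (R : realType) (t : R * R * R * R) : quat R :=
  let: (a, b, c, d) := t in Quat a b c d.
Lemma quat_tupleK (R : realType) : cancel (@quat_tuple R) (@tuple_quat R).
Proof. by case. Qed.
HB.instance Definition _ (R : realType) :=
  Equality.copy (quat R) (can_type (@quat_tupleK R)).

Section Quaternions.
Variable R : realType.
Local Notation H := (quat R).

Definition qzero : H := Quat 0 0 0 0.
Definition qone : H := Quat 1 0 0 0.
Definition qI : H := Quat 0 1 0 0.
Definition qJ : H := Quat 0 0 1 0.
Definition qK : H := Quat 0 0 0 1.

Definition qadd (x y : H) : H :=
  Quat (q0 x + q0 y) (q1 x + q1 y) (q2 x + q2 y) (q3 x + q3 y).
Definition qopp (x : H) : H := Quat (- q0 x) (- q1 x) (- q2 x) (- q3 x).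

Definition qmul (x y : H) : H :=
  Quat (q0 x * q0 y - q1 x * q1 y - q2 x * q2 y - q3 x * q3 y)
       (q0 x * q1 y + q1 x * q0 y + q2 x * q3 y - q3 x * q2 y)
       (q0 x * q2 y - q1 x * q3 y + q2 x * q0 y + q3 x * q1 y)
       (q0 x * q3 y + q1 x * q2 y - q2 x * q1 y + q3 x * q0 y).

Definition qconj (x : H) : H := Quat (q0 x) (- q1 x) (- q2 x) (- q3 x).
Definition qnorm2 (x : H) : R := q0 x ^+ 2 + q1 x ^+ 2 + q2 x ^+ 2 + q3 x ^+ 2.
Definition qinv (x : H) : H :=
  let c := (qnorm2 x)^-1 in
  Quat (c * q0 x) (c * - q1 x) (c * - q2 x) (c * - q3 x).

Definition qpow (x : H) (k : nat) : H := iter k (qmul x) qone.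

Inductive qgen (S : set H) : set H :=
| qgen_one : qgen S qone
| qgen_base x : S x -> qgen S x
| qgen_mul x y : qgen S x -> qgen S y -> qgen S (qmul x y)
| qgen_inv x : qgen S x -> qgen S (qinv x).

Definition omega (n : nat) : H := Quat (cos (pi / n%:R)) (sin (pi / n%:R)) 0 0.

Definition Dic (n : nat) : set H := qgen [set omega n; qJ].

Definition Ccyc (n r : nat) : set H := qgen [set qpow (omega n) (2 * n %/ r)].

Definition qcirc (x y : H) : H := qmul (qmul x (qinv y)) x.
Inductive Lclos (X : set H) : set H :=
| Lclos_base x : X x -> Lclos X x
| Lclos_circ x y : Lclos X x -> Lclos X y -> Lclos X (qcirc x y).

Definition Lab (n a b : nat) : set H :=
  Lclos [set qone; qpow (omega n) a; qJ; qmul (qpow (omega n) b) qJ].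

Record mat2 := Mat2 { m11 : H; m12 : H; m21 : H; m22 : H }.

Definition mat2_tuple (A : mat2) := (m11 A, m12 A, m21 A, m22 A).
Definition tuple_mat2 (t : H * H * H * H) : mat2 :=
  let: (a, b, c, d) := t in Mat2 a b c d.
Lemma mat2_tupleK : cancel mat2_tuple tuple_mat2.
Proof. by case. Qed.

Definition mI : mat2 := Mat2 qone qzero qzero qone.
Definition mzero : mat2 := Mat2 qzero qzero qzero qzero.
Definition mmul (A B : mat2) : mat2 :=
  Mat2 (qadd (qmul (m11 A) (m11 B)) (qmul (m12 A) (m21 B)))
       (qadd (qmul (m11 A) (m12 B)) (qmul (m12 A) (m22 B)))
       (qadd (qmul (m21 A) (m11 B)) (qmul (m22 A) (m21 B)))
       (qadd (qmul (m21 A) (m12 B)) (qmul (m22 A) (m22 B))).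
Definition msub (A B : mat2) : mat2 :=
  Mat2 (qadd (m11 A) (qopp (m11 B))) (qadd (m12 A) (qopp (m12 B)))
       (qadd (m21 A) (qopp (m21 B))) (qadd (m22 A) (qopp (m22 B))).
Definition madj (A : mat2) : mat2 :=
  Mat2 (qconj (m11 A)) (qconj (m21 A)) (qconj (m12 A)) (qconj (m22 A)).

Definition unitary (A : mat2) : Prop := mmul (madj A) A = mI.

(* rank A = 1 over the division ring H: A <> 0 and A = u v^T
   (column u times row v), i.e. all rows are left multiples of one row. *)
Definition rank1 (A : mat2) : Prop :=
  A <> mzero /\
  exists u1 u2 v1 v2 : H,
    A = Mat2 (qmul u1 v1) (qmul u1 v2) (qmul u2 v1) (qmul u2 v2).

Definition reflection (g : mat2) : Prop :=
  unitary g /\ g <> mI /\ rank1 (msub g mI).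

(* subgroup of U(H^2) generated by a set S of unitary matrices
   (for unitary matrices the inverse is the conjugate transpose) *)
Inductive mgen (S : set mat2) : set mat2 :=
| mgen_one : mgen S mI
| mgen_base g : S g -> mgen S g
| mgen_mul g h : mgen S g -> mgen S h -> mgen S (mmul g h)
| mgen_inv g : mgen S g -> mgen S (madj g).

Definition diag2 (h k : H) : mat2 := Mat2 h qzero qzero k.
Definition Mb (b : H) : mat2 := Mat2 qzero b (qinv b) qzero.

Definition HL (L : set H) : set H :=
  [set h | mgen [set g | exists2 b, L b & g = Mb b] (diag2 h qone)].

(* G(K, L, H) (does not depend on K) *)
Definition Ggrp (L Hs : set H) : set mat2 :=
  mgen [set g | (exists2 h, Hs h & g = diag2 h qone \/ g = diag2 qone h)
                \/ (exists2 b, L b & g = Mb b)].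

Definition GK_conditions (K L Hs : set H) : Prop :=
  [/\ Hs `<=` K,
      (forall k h, K k -> Hs h -> Hs (qmul (qmul k h) (qinv k))),
      Hs `<=` L,
      [set z | exists x y, [/\ L x, Hs y & z = qmul x y]] = L &
      [set b | Ggrp L Hs (Mb b)] = L].

Definition base_group (L : set H) : set mat2 := Ggrp L (HL L).

End Quaternions.

HB.instance Definition _ (R : realType) :=
  Equality.copy (mat2 R) (can_type (@mat2_tupleK R)).

Definition has_card (T : eqType) (P : set T) (m : nat) : Prop :=
  exists s : seq T, [/\ uniq s, size s = m & forall x, P x <-> x \in s].

Definition Omega (n a b : nat) : bool :=
  [&& 1 <= a, a <= b, b <= n, a %| n, b %| n & coprime a b]%N.

From HB Require Import structures.
From mathcomp Require Import all_boot all_order all_algebra.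
From mathcomp Require Import boolp classical_sets reals trigo.
From mathcomp Require Import ring lra zify.
Set Implicit Arguments. Unset Strict Implicit. Unset Printing Implicit Defensive.
Import Order.TTheory GRing.Theory Num.Theory.

(* Writing every element of $\mathcal{D}_n$ as [dic k e] $= \omega^k j^e$, the reflection
   system is $L = \{\omega^k : a \mid k\} \cup \{\omega^k j : b \mid k\}$, and the group
   generated by the $M_c$, $c \in L$, is the set of diagonal and antidiagonal matrices with
   entries $\omega^u j^e$, $\omega^v j^e$ such that $u + v \equiv ne \pmod{2b}$ and
   $u - v \equiv ne \pmod{2a}$.  Everything is read off this description: its elements
   $\mathrm{diag}(h, 1)$ are those with $h = \omega^u$, $2ab \mid u$ (as $a, b$ are coprime),
   so $H_L = \langle \omega^{2ab} \rangle$ and the base group is the group itself; it is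
   parametrised by $(x \bmod 2n/a, y \bmod n/b)$ and the two bits $t, e$; its reflections are
   the $M_c$, $c \in L$, and $\mathrm{diag}(h, 1)$, $\mathrm{diag}(1, h)$ with
   $1 \ne h \in H_L$; finally $M_c \in G$ iff $c \in L$, so $G$ determines $L$, which
   determines $(a, b)$. *)

Section QuaternionAlgebra.
Local Open Scope ring_scope.
Local Open Scope classical_set_scope.
Variable R : realType.
Local Notation H := (quat R).
Local Notation qone := (@qone R).
Local Notation qzero := (@qzero R).
Implicit Types p q r : H.

Lemma qmulA p q r : qmul p (qmul q r) = qmul (qmul p q) r.
Proof. case: p q r => ???? [????] [????]; rewrite /qmul /=; congr Quat; ring. Qed.

Lemma qmul1q q : qmul qone q = q.
Proof. case: q => ????; rewrite /qmul /=; congr Quat; ring. Qed.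

Lemma qmulq1 q : qmul q qone = q.
Proof. case: q => ????; rewrite /qmul /=; congr Quat; ring. Qed.

Lemma qmul0q q : qmul qzero q = qzero.
Proof. case: q => ????; rewrite /qmul /qzero /=; congr Quat; ring. Qed.

Lemma qmulq0 q : qmul q qzero = qzero.
Proof. case: q => ????; rewrite /qmul /qzero /=; congr Quat; ring. Qed.

Lemma qadd0q q : qadd qzero q = q.
Proof. case: q => ????; rewrite /qadd /qzero /=; congr Quat; ring. Qed.

Lemma qaddq0 q : qadd q qzero = q.
Proof. case: q => ????; rewrite /qadd /qzero /=; congr Quat; ring. Qed.

Lemma qmulNq p q : qmul (qopp p) q = qopp (qmul p q).
Proof. case: p q => ???? [????]; rewrite /qmul /qopp /=; congr Quat; ring. Qed.

Lemma qmulqN p q : qmul p (qopp q) = qopp (qmul p q).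
Proof. case: p q => ???? [????]; rewrite /qmul /qopp /=; congr Quat; ring. Qed.

Lemma qoppK q : qopp (qopp q) = q.
Proof. by case: q => ????; rewrite /qopp /= !opprK. Qed.

Lemma qconj0 : qconj qzero = qzero.
Proof. by rewrite /qconj /qzero /= oppr0. Qed.

Lemma qsubq0 q : qadd q (qopp qzero) = q.
Proof. case: q => ????; rewrite /qadd /qopp /qzero /=; congr Quat; ring. Qed.

Lemma qsubqq q : qadd q (qopp q) = qzero.
Proof. case: q => ????; rewrite /qadd /qopp /qzero /=; congr Quat; ring. Qed.

Lemma qsub_eq0 p q : qadd p (qopp q) = qzero -> p = q.
Proof.
case: p q => ???? [????]; rewrite /qadd /qopp /qzero => -[] *.
by congr Quat; apply/eqP; rewrite -subr_eq0; apply/eqP.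
Qed.

Lemma qone_neq0 : qone <> qzero.
Proof. by move=> [] /eqP; rewrite oner_eq0. Qed.

Lemma qnorm2_eq0 q : qnorm2 q = 0 -> q = qzero.
Proof.
case: q => x y z w; rewrite /qnorm2 /= => q0.
have -> : x = 0 by nra.
have -> : y = 0 by nra.
have -> : z = 0 by nra.
by have -> : w = 0 by nra.
Qed.

Lemma qmulVq q : q <> qzero -> qmul (qinv q) q = qone.
Proof.
move=> nq; have : qnorm2 q != 0 by apply/eqP => /qnorm2_eq0.
case: q {nq} => x y z w; rewrite /qinv /qmul /qone /qnorm2 /=.
set N := _ + _ + _ + _ => /mulVf NN.
by congr Quat; rewrite -?NN /N; ring.
Qed.

Lemma qmul_eq0 p q : qmul p q = qzero -> p = qzero \/ q = qzero.
Proof.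
case: (eqVneq p qzero) => [-> | /eqP np pq]; [by left | right].
by rewrite -[q]qmul1q -(qmulVq np) -qmulA pq qmulq0.
Qed.

Lemma qmul_eq1C p q : qmul p q = qone -> qmul q p = qone.
Proof.
move=> pq; have np : p <> qzero by move=> p0; apply: qone_neq0; rewrite -pq p0 qmul0q.
suff -> : q = qinv p by apply: qmulVq.
by rewrite -[q]qmul1q -(qmulVq np) -qmulA pq qmulq1.
Qed.

Lemma qmulqV q : q <> qzero -> qmul q (qinv q) = qone.
Proof. by move/qmulVq/qmul_eq1C. Qed.

Lemma qgen_sub (S S' : set H) : S `<=` S' -> qgen S `<=` qgen S'.
Proof.
move=> SS' x; elim=> [|y /SS'|y z _ Sy _ Sz|y _ Sy]; [exact: qgen_one|exact: qgen_base|..].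
  exact: qgen_mul.
exact: qgen_inv.
Qed.

End QuaternionAlgebra.

Section MonomialMatrices.
Local Open Scope ring_scope.
Local Open Scope classical_set_scope.
Variable R : realType.
Local Notation H := (quat R).
Local Notation M := (mat2 R).
Local Notation qone := (@qone R).
Local Notation qzero := (@qzero R).
Local Notation mI := (@mI R).
Implicit Types (c x y : H) (g : M).

Lemma mat2_entries (p q r s p' q' r' s' : H) :
  Mat2 p q r s = Mat2 p' q' r' s' -> [/\ p = p', q = q', r = r' & s = s'].
Proof. by case=> -> -> -> ->. Qed.

Definition mono (t : bool) x y : M := if t then Mat2 qzero x y qzero else diag2 x y.

Lemma mono_mul t x y t' x' y' :
  mmul (mono t x y) (mono t' x' y') =
  mono (t (+) t') (qmul x (if t then y' else x')) (qmul y (if t then x' else y')).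
Proof.
by case: t t' => -[]; rewrite /mono /diag2 /mmul /= ?qmul0q ?qmulq0 ?qadd0q ?qaddq0.
Qed.

Lemma mono_adj t x y :
  madj (mono t x y) = mono t (qconj (if t then y else x)) (qconj (if t then x else y)).
Proof. by case: t; rewrite /mono /diag2 /madj /= qconj0. Qed.

Lemma mono_eq_inj t x y t' x' y' : x <> qzero -> x' <> qzero ->
  mono t x y = mono t' x' y' -> [/\ t = t', x = x' & y = y'].
Proof.
by case: t t' => -[] nx nx' [] *; subst.
Qed.

Lemma diag_mul x y x' y' : mmul (diag2 x y) (diag2 x' y') = diag2 (qmul x x') (qmul y y').
Proof. exact: (mono_mul false x y false x' y'). Qed.

Lemma Mb_mul c c' : mmul (Mb c) (Mb c') = diag2 (qmul c (qinv c')) (qmul (qinv c) c').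
Proof. exact: (mono_mul true c (qinv c) true c' (qinv c')). Qed.

Lemma Mb_diag c x y : mmul (Mb c) (diag2 x y) = mono true (qmul c y) (qmul (qinv c) x).
Proof. exact: (mono_mul true c (qinv c) false x y). Qed.

Lemma unitary_mono t x y :
  qmul (qconj x) x = qone -> qmul (qconj y) y = qone -> unitary (mono t x y).
Proof.
move=> xx yy; rewrite /unitary mono_adj mono_mul addbb.
by case: t; rewrite /= xx yy.
Qed.

Lemma rank1_antidiag_subI x y : rank1 (msub (mono true x y) mI) <-> qmul y x = qone.
Proof.
rewrite /msub /= !qadd0q !qsubq0; split.
  move=> [_ [u1 [u2 [v1 [v2 uv]]]]].
  have [u1v1 u1v2 u2v1 u2v2] := mat2_entries uv.
  have v1u1 : qmul v1 u1 = qopp qone.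
    have : qmul (qopp u1) v1 = qone by rewrite qmulNq -u1v1 qoppK.
    by move/qmul_eq1C; rewrite qmulqN => <-; rewrite qoppK.
  by rewrite u1v2 u2v1 -qmulA (qmulA v1) v1u1 qmulNq qmul1q qmulqN -u2v2 qoppK.
move=> yx; split.
  by move=> /(congr1 (@m11 R)) /(congr1 (@q0 R)) /= /eqP; rewrite oppr_eq0 oner_eq0.
exists qone, (qopp y), (qopp qone), x.
by rewrite !qmul1q !qmulNq !qmulqN qmulq1 qoppK yx.
Qed.

Lemma rank1_diag_subI x y : diag2 x y <> mI ->
  rank1 (msub (diag2 x y) mI) <-> x = qone \/ y = qone.
Proof.
move=> nI; rewrite /msub /= !qsubq0; split.
  move=> [_ [u1 [u2 [v1 [v2 uv]]]]].
  have [x1 u1v2 _ y1] := mat2_entries uv.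
  case: (eqVneq x qone) => [|/eqP nx1]; [by left | right].
  have nz : qmul u1 v1 <> qzero by rewrite -x1 => /qsub_eq0.
  have [u10|v20] := qmul_eq0 (esym u1v2).
    by case: nz; rewrite u10 qmul0q.
  by apply: qsub_eq0; rewrite y1 v20 qmulq0.
have nz : Mat2 (qadd x (qopp qone)) qzero qzero (qadd y (qopp qone)) <> mzero R.
  by move=> /mat2_entries [/qsub_eq0 x1 _ _ /qsub_eq0 y1]; apply: nI; rewrite x1 y1.
case=> [x1 | y1]; split=> //.
- by exists qzero, qone, qzero, (qadd y (qopp qone)); rewrite x1 qsubqq !qmul0q !qmul1q.
- by exists qone, qzero, (qadd x (qopp qone)), qzero; rewrite y1 qsubqq !qmul0q !qmulq0 !qmul1q.
Qed.

Lemma mgen_ind (S P : set M) : S `<=` P -> P mI ->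
  (forall g h, P g -> P h -> P (mmul g h)) -> (forall g, P g -> P (madj g)) ->
  mgen S `<=` P.
Proof. by move=> SP P1 PM PA g; elim=> //; auto. Qed.

Lemma mgen_sub (S S' : set M) : S `<=` S' -> mgen S `<=` mgen S'.
Proof.
move=> SS'; apply: mgen_ind; [|exact: mgen_one|exact: mgen_mul|exact: mgen_inv].
by move=> g /SS'; apply: mgen_base.
Qed.

End MonomialMatrices.

Section Cardinality.
Local Open Scope classical_set_scope.
Variable T : eqType.
Implicit Types P Q : set T.

Lemma has_card_fintype (I : finType) (f : I -> T) P :
  injective f -> (forall x, P x <-> exists i, x = f i) -> has_card P #|I|.
Proof.
move=> f_inj Pf; exists (map f (enum I)); split.
- by rewrite map_inj_uniq // enum_uniq.
- by rewrite size_map cardE.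
- move=> x; rewrite Pf; split=> [[i ->]|/mapP[i _ ->]]; last by exists i.
  by apply: map_f; rewrite mem_enum.
Qed.

Lemma has_card_image (U : eqType) (f : T -> U) P m :
  injective f -> has_card P m -> has_card (f @` P) m.
Proof.
move=> f_inj [s [us <- Ps]]; exists (map f s); split.
- by rewrite map_inj_uniq.
- by rewrite size_map.
- move=> y; split=> [[x /Ps xs <-]|/mapP[x xs ->]]; first exact: map_f.
  by exists x => //; apply/Ps.
Qed.

Lemma has_card_setU P Q m k : (forall x, P x -> ~ Q x) ->
  has_card P m -> has_card Q k -> has_card (P `|` Q) (m + k).
Proof.
move=> PQ [s [us <- Ps]] [t [ut <- Qt]]; exists (s ++ t); split.
- rewrite cat_uniq us ut andbT; apply/hasPn => x /Qt Qx.
  by apply/negP => /Ps Px; exact: PQ Px Qx.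
- by rewrite size_cat.
- move=> x; rewrite mem_cat /setU /=; split.
    by case=> [/Ps|/Qt] ->; rewrite ?orbT.
  by case/orP=> [/Ps|/Qt]; [left|right].
Qed.

Lemma has_card_setD1 P x m : P x -> has_card P m -> has_card (P `\ x) m.-1.
Proof.
move=> Px [s [us <- Ps]]; exists (rem x s); split.
- exact: rem_uniq.
- by rewrite size_rem //; apply/Ps.
- move=> y; rewrite (mem_rem_uniq _ us) inE /=; split.
    by move=> [/Ps -> yx]; rewrite andbT; apply/eqP.
  by move=> /andP[/eqP yx /Ps Py].
Qed.

End Cardinality.

Section IntegerArithmetic.
Local Open Scope ring_scope.

Lemma periodicz (U V : zmodType) (f : U -> V) (T : U) :
  periodic f T -> forall (m : int) a, f (a + T *~ m) = f a.
Proof.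
move=> fT [] j a; first exact: periodicn.
by rewrite NegzE mulrNz -[in RHS](subrK (T *+ j.+1) a) periodicn.
Qed.

Lemma dvdz_small_eq0 (d x : int) : (d %| x)%Z -> `|x| < `|d| -> x = 0.
Proof.
move=> /dvdzP[k ->]; rewrite normrM => lt.
suff -> : k = 0 by rewrite mul0r.
nia.
Qed.

Lemma ord_of_int (K : nat) (r : int) : 0 <= r < K%:Z -> exists i : 'I_K, r = i%:Z.
Proof.
move=> /andP[r0 rK]; have rK' : (`|r|%N < K)%N by rewrite -ltz_nat gez0_abs.
by exists (Ordinal rK'); rewrite /= gez0_abs.
Qed.

End IntegerArithmetic.

Section DicyclicGroup.
Local Open Scope ring_scope.
Variable R : realType.
Variable n : nat.
Hypothesis n_gt0 : (0 < n)%N.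
Local Notation H := (quat R).
Local Notation N := n%:Z.
Implicit Types (k l : int) (e f : bool).

Definition theta k : R := k%:~R * pi / n%:R.

Lemma thetaD k l : theta (k + l) = theta k + theta l.
Proof. by rewrite /theta intrD !mulrDl. Qed.

Lemma thetaN k : theta (- k) = - theta k.
Proof. by rewrite /theta mulrNz !mulNr. Qed.

Lemma theta_n : theta N = pi.
Proof. by rewrite /theta pmulrn mulrAC mulfV ?mul1r // pnatr_eq0 -lt0n. Qed.

Lemma theta_period k m : theta (k + m * (2 * N)) = theta k + (pi *+ 2) *~ m.
Proof.
have n0 : n%:R != 0 :> R by rewrite pnatr_eq0 -lt0n.
rewrite thetaD /theta -mulrzr -mulr_natr !intrM pmulrn.
by field.
Qed.

Lemma theta_itv k : 0 <= k <= N -> theta k \in `[0, pi].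
Proof.
move=> /andP[k0 kn]; rewrite in_itv /=; apply/andP; split.
  by rewrite divr_ge0 ?ler0n // mulr_ge0 ?pi_ge0 ?ler0z.
by rewrite -theta_n ler_pM2r ?invr_gt0 ?ltr0n // ler_pM2r ?pi_gt0 // ler_int.
Qed.

Lemma theta_eq0 k : theta k = 0 -> k = 0.
Proof.
move=> t0; apply/eqP; rewrite -(intr_eq0 R).
have pi0 : pi != 0 :> R by rewrite gt_eqF ?pi_gt0.
have n0 : n%:R != 0 :> R by rewrite pnatr_eq0 -lt0n.
have -> : k%:~R = theta k * n%:R / pi :> R by rewrite /theta divfK // mulfK.
by rewrite t0 !mul0r.
Qed.

Lemma cos_theta_eq1 k : cos (theta k) = 1 -> (2 * N %| k)%Z.
Proof.
(* [k] is congruent mod [2n] to some [r] in [[-n, n)], and [cos] is injective on [[0, pi]]. *)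
set r := ((k + N) %% (2 * N))%Z - N.
have N2 : 0 < 2 * N by lia.
have kr : k = r + ((k + N) %/ (2 * N))%Z * (2 * N).
  by have := divz_eq (k + N) (2 * N); rewrite /r; lia.
have r_range : - N <= r < N.
  have := ltz_pmod (k + N) N2; have := modz_ge0 (k + N) (lt0r_neq0 N2).
  by rewrite /r; lia.
have cos_r : cos (theta `|r|) = cos (theta k).
  rewrite [in RHS]kr theta_period (periodicz (@cosD2pi R)).
  by case: (lerP 0 r) => r0; rewrite ?(ger0_norm r0) ?(ltr0_norm r0) ?thetaN ?cosN.
rewrite -cos_r -cos0 => /cos_inj.
have /theta_itv -> : 0 <= `|r| <= N by apply/andP; split; lia.
rewrite in_itv /= lexx pi_ge0 => /(_ isT isT).
by move=> /theta_eq0 /normr0_eq0 r0; rewrite kr r0 add0r dvdz_mull.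
Qed.

(* [dic k e] is the element $\omega^k j^e$ of $\mathcal{D}_n$. *)
Definition dic k e : H :=
  if e then Quat 0 0 (cos (theta k)) (sin (theta k))
  else Quat (cos (theta k)) (sin (theta k)) 0 0.
#[global] Arguments dic : simpl never.

Definition exp_mul k e l f : int := (if e then k - l else k + l) + (if e && f then N else 0).
Definition exp_inv k e : int := if e then k + N else - k.

Lemma dic_mul k e l f : qmul (dic k e) (dic l f) = dic (exp_mul k e l f) (e (+) f).
Proof.
rewrite /exp_mul.
case: e f => -[]; rewrite /dic /qmul /= ?addr0 ?thetaD ?thetaN ?theta_n
  ?cosDpi ?sinDpi ?cosD ?sinD ?cosN ?sinN; congr Quat; ring.
Qed.

Lemma dic_norm2 k e : qnorm2 (dic k e) = 1.
Proof. by case: e; rewrite /qnorm2 /dic /= -(cos2Dsin2 (theta k)); ring. Qed.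

Lemma dic_inv k e : qinv (dic k e) = dic (exp_inv k e) e.
Proof.
rewrite /exp_inv /qinv dic_norm2 invr1.
by case: e; rewrite /dic /= ?thetaD ?thetaN ?theta_n ?cosDpi ?sinDpi ?cosN ?sinN; congr Quat; ring.
Qed.

Lemma dic_conj k e : qconj (dic k e) = qinv (dic k e).
Proof.
rewrite dic_inv /exp_inv.
by case: e; rewrite /dic /qconj /= ?thetaD ?thetaN ?theta_n ?cosDpi ?sinDpi ?cosN ?sinN; congr Quat; ring.
Qed.

Lemma dic_neq0 k e : dic k e <> qzero R.
Proof.
move=> k0; have := dic_norm2 k e; rewrite k0 /qnorm2 /= expr0n /= !addr0.
by move=> /eqP; rewrite eq_sym oner_eq0.
Qed.

Lemma dic_eqP k l e f : dic k e = dic l f <-> e = f /\ (2 * N %| k - l)%Z.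
Proof.
split=> [kl|[<- /dvdzP[m km]]]; last first.
  by rewrite -(subrK l k) km addrC /dic theta_period (periodicz (@cosD2pi R)) (periodicz (@sinD2pi R)).
have cs0 (x : R) : cos x = 0 -> sin x = 0 -> False.
  by move=> c0 s0; have := cos2Dsin2 x; rewrite c0 s0 expr0n /= addr0 => /eqP; rewrite eq_sym oner_eq0.
have cos_kl : cos (theta k) = cos (theta l) -> sin (theta k) = sin (theta l) -> (2 * N %| k - l)%Z.
  move=> c s; apply: cos_theta_eq1.
  by rewrite thetaD thetaN cosD cosN sinN c s -(cos2Dsin2 (theta l)); ring.
move: (congr1 (@q0 R) kl) (congr1 (@q1 R) kl) (congr1 (@q2 R) kl) (congr1 (@q3 R) kl).
case: e f {kl} => -[]; rewrite /dic /= => h0 h1 h2 h3; first [by split=> //; apply: cos_kl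
  | by case: (cs0 _ h0 h1) | by case: (cs0 _ h2 h3)].
Qed.

Lemma eq_dic k l e : (2 * N %| k - l)%Z -> dic k e = dic l e.
Proof. by move=> kl; apply/dic_eqP. Qed.

Lemma qone_dic : qone R = dic 0 false.
Proof. by rewrite /dic /theta mul0r mul0r cos0 sin0. Qed.

Lemma qJ_dic : qJ R = dic 0 true.
Proof. by rewrite /dic /theta mul0r mul0r cos0 sin0. Qed.

Lemma omega_dic : omega R n = dic 1 false.
Proof. by rewrite /dic /theta mul1r. Qed.

Lemma qpow_omega m : qpow (omega R n) m = dic m false.
Proof.
elim: m => [|m IHm]; first by rewrite -qone_dic.
by rewrite /qpow iterS -/(qpow _ m) IHm omega_dic dic_mul /exp_mul /= addr0 -addn1 PoszD addrC.
Qed.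

Lemma qpow_omegaJ m : qmul (qpow (omega R n) m) (qJ R) = dic m true.
Proof. by rewrite qpow_omega qJ_dic dic_mul /exp_mul /= !addr0. Qed.

Lemma qcirc_dic k l e : qcirc (dic k e) (dic l e) = dic (2 * k - l) e.
Proof. by rewrite /qcirc dic_inv !dic_mul /exp_inv /exp_mul addbb; case: e => /=; congr (dic _ _); lia. Qed.

Local Open Scope classical_set_scope.

Definition dic_multiples (d : int) e : set H := [set x | exists z : int, x = dic (z * d) e].

Lemma dic_multiples_dic d k e f : (d %| 2 * N)%Z ->
  dic_multiples d e (dic k f) <-> e = f /\ (d %| k)%Z.
Proof.
move=> /dvdzP[m dm]; split=> [[z /dic_eqP[<- /dvdzP[w kz]]]|[<- /dvdzP[z ->]]].
  split=> //; apply/dvdzP; exists (z + w * m).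
  by rewrite mulrDl -mulrA -dm -kz addrC subrK.
by exists z.
Qed.

Lemma has_card_dic_multiples (K : nat) (d : int) e : (0 < K)%N -> 2 * N = K%:Z * d ->
  has_card (dic_multiples d e) K.
Proof.
move=> K_gt0 Kd; have d0 : d != 0 by apply/eqP => d0; move: Kd; rewrite d0 mulr0; lia.
rewrite -[in has_card _ K](card_ord K).
apply: (has_card_fintype (f := fun i : 'I_K => dic (i%:Z * d) e)).
  move=> i j /dic_eqP[_]; rewrite Kd -mulrBl dvdz_mul2r // => /dvdz_small_eq0 ij.
  apply: ord_inj; suff: i%:Z - j%:Z = 0 by lia.
  by apply: ij; have := ltn_ord i; have := ltn_ord j; lia.
move=> x; split=> [[z ->]|[i ->]]; last by exists i.
have K0 : K%:Z != 0 by rewrite eqz_nat -lt0n.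
have [i zi] : exists i : 'I_K, (z %% K)%Z = i%:Z.
  by apply: ord_of_int; rewrite modz_ge0 // ltz_pmod // ltz_nat.
exists i; apply: eq_dic; rewrite -zi {1}(divz_eq z K) -mulrBl addrK -mulrA -Kd.
exact: dvdz_mull.
Qed.

Lemma Lclos_dic_multiples (X : set H) d e :
  Lclos X (dic 0 e) -> Lclos X (dic d e) -> dic_multiples d e `<=` Lclos X.
Proof.
move=> X0 Xd.
have Xz (m : nat) : [/\ Lclos X (dic (m%:Z * d) e), Lclos X (dic (m.+1%:Z * d) e),
    Lclos X (dic (- m%:Z * d) e) & Lclos X (dic (- m.+1%:Z * d) e)].
  elim: m => [|m [IH0 IH1 IH2 IH3]].
    have := Lclos_circ X0 Xd; rewrite qcirc_dic mulr0 sub0r.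
    by rewrite !mul0r => Xmd; split; rewrite ?mul1r ?mulN1r.
  split=> //.
    rewrite (_ : _ * d = 2 * (m.+1%:Z * d) - m%:Z * d); last by rewrite !intS; ring.
    by rewrite -qcirc_dic; apply: Lclos_circ.
  rewrite (_ : _ * d = 2 * (- m.+1%:Z * d) - (- m%:Z * d)); last by rewrite !intS; ring.
  by rewrite -qcirc_dic; apply: Lclos_circ.
by move=> _ [[] m ->]; [case: (Xz m) | rewrite NegzE; case: (Xz m)].
Qed.

Lemma qgen_dic_multiples d : qgen [set dic d false] = dic_multiples d false.
Proof.
apply/seteqP; split=> x.
  elim=> [|_ ->|_ _ _ [z ->] _ [z' ->]|_ _ [z ->]].
  - by exists 0; rewrite mul0r qone_dic.
  - by exists 1; rewrite mul1r.
  - by exists (z + z'); rewrite dic_mul /exp_mul /= addr0 mulrDl.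
  - by exists (- z); rewrite dic_inv /exp_inv mulNr.
have gen_nat (m : nat) : qgen [set dic d false] (dic (m%:Z * d) false).
  elim: m => [|m IHm]; first by rewrite mul0r -qone_dic; apply: qgen_one.
  have := qgen_mul (qgen_base (erefl : [set dic d false] (dic d false))) IHm.
  by rewrite dic_mul /exp_mul /= addr0 intS mulrDl mul1r.
move=> [[m|m] ->]; first exact: gen_nat.
by have := qgen_inv (gen_nat m.+1); rewrite dic_inv /exp_inv NegzE mulNr.
Qed.

Lemma Dic_eq : @Dic R n = [set x | exists k e, x = dic k e].
Proof.
apply/seteqP; split=> x.
  elim=> [|_ [->|->]|_ _ _ [k [e ->]] _ [l [f ->]]|_ _ [k [e ->]]].
  - by exists 0, false; rewrite qone_dic.
  - by exists 1, false; rewrite omega_dic.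
  - by exists 0, true; rewrite qJ_dic.
  - by rewrite dic_mul; do 2 eexists.
  - by rewrite dic_inv; do 2 eexists.
have Dic_false k : @Dic R n (dic k false).
  apply: (qgen_sub (S := [set dic 1 false])); first by move=> _ ->; left; rewrite omega_dic.
  by rewrite qgen_dic_multiples; exists k; rewrite mulr1.
move=> [k [[] ->]]; last exact: Dic_false.
have -> : dic k true = qmul (dic k false) (qJ R) by rewrite qJ_dic dic_mul /exp_mul /= !addr0.
by apply: qgen_mul (Dic_false k) _; apply: qgen_base; right.
Qed.

Lemma Mb_dic_mul k l e : mmul (Mb (dic k e)) (Mb (dic l e)) =
  diag2 (dic (k - l) false) (dic (if e then k - l else l - k) false).
Proof.
rewrite Mb_mul !dic_inv !dic_mul /exp_inv /exp_mul addbb.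
by case: e => /=; congr diag2; apply: eq_dic; apply/dvdzP; [exists 0|exists 1|exists 0|exists 0]; lia.
Qed.

End DicyclicGroup.

Section BaseGroup.
Local Open Scope ring_scope.
Local Open Scope classical_set_scope.
Variable R : realType.
Variables n a b : nat.
Hypotheses (n_gt0 : (0 < n)%N) (a_dvd_n : (a %| n)%N) (b_dvd_n : (b %| n)%N).
Local Notation H := (quat R).
Local Notation M := (mat2 R).
Local Notation N := n%:Z.
Local Notation A := a%:Z.
Local Notation B := b%:Z.
Local Notation dic := (@dic R n).
Local Notation dic_multiples := (@dic_multiples R n).
Implicit Types (k l u v : int) (e f t : bool) (c h p q : H) (g : M).

Definition na : int := (n %/ a)%N.
Definition nb : int := (n %/ b)%N.

Lemma N_na : N = na * A. Proof. by rewrite /na -PoszM divnK. Qed.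
Lemma N_nb : N = nb * B. Proof. by rewrite /nb -PoszM divnK. Qed.

Definition Lset : set H := dic_multiples A false `|` dic_multiples B true.
Definition Hset : set H := dic_multiples (2 * A * B) false.

Definition shift e : int := if e then N else 0.
Definition admissible e u v : bool :=
  (2 * B %| u + v - shift e)%Z && (2 * A %| u - v - shift e)%Z.
Definition Gset : set M :=
  [set g | exists t e u v, g = mono t (dic u e) (dic v e) /\ admissible e u v].

Lemma Lset_dic k e : Lset (dic k e) <-> (if e then B %| k else A %| k)%Z.
Proof.
have dvd2N (d : int) m : N = m * d -> (d %| 2 * N)%Z by move=> ->; rewrite mulrA dvdz_mull.
rewrite /Lset /setU /= !dic_multiples_dic ?(dvd2N _ _ N_na) ?(dvd2N _ _ N_nb) //.
by case: e; split=> [[[]|[]]|] //; [right|left].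
Qed.

Lemma Lab_eq : Lab n a b = Lset.
Proof.
apply/seteqP; split=> c.
  elim=> [x [[[->|->]|->]|->]|x y _ Lx _ Ly].
  - by rewrite (qone_dic R n); apply/(Lset_dic 0 false); rewrite dvdz0.
  - by rewrite (qpow_omega _ n_gt0); apply/(Lset_dic a false).
  - by rewrite (qJ_dic R n); apply/(Lset_dic 0 true); rewrite dvdz0.
  - by rewrite (qpow_omegaJ _ n_gt0); apply/(Lset_dic b true).
  move: Lx Ly => [[] z -> | [] z ->] [[] z' -> | [] z' ->];
    rewrite /qcirc dic_inv // !dic_mul // /exp_inv /exp_mul; apply/Lset_dic; apply/dvdzP => /=.
  - by exists (2 * z - z'); lia.
  - by exists (z' + nb); rewrite N_nb; lia.
  - by exists (z' + na); rewrite N_na; lia.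
  - by exists (2 * z - z'); lia.
case=> Lc; apply: (Lclos_dic_multiples n_gt0 _ _ Lc); apply: Lclos_base.
- by rewrite -(qone_dic R n); left; left; left.
- by rewrite -qpow_omega //; left; left; right.
- by rewrite -(qJ_dic R n); left; right.
- by rewrite -qpow_omegaJ //; right.
Qed.

Lemma Lab_dic k e : @Lab R n a b (dic k e) <-> (if e then B %| k else A %| k)%Z.
Proof. by rewrite Lab_eq; exact: Lset_dic. Qed.

Lemma admissibleP e u v :
  admissible e u v <-> exists x y, u = x * A + y * B + shift e /\ v = y * B - x * A.
Proof.
split=> [/andP[/dvdzP[y uv] /dvdzP[x uv']] | [x [y [-> ->]]]].
  by exists x, y; split; lia.
by apply/andP; split; apply/dvdzP; [exists y | exists x]; lia.
Qed.

Lemma admissible_swap e u v : admissible e v u -> admissible e u v.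
Proof.
move=> /andP[/dvdzP[y uv] /dvdzP[x uv']]; apply/andP; split; apply/dvdzP.
  by exists y; lia.
by exists (- x - (if e then na else 0)); move: uv uv'; have := N_na; rewrite /shift; case: e; lia.
Qed.

Lemma admissible_mul e u v f u' v' : admissible e u v -> admissible f u' v' ->
  admissible (e (+) f) (exp_mul n u e u' f) (exp_mul n v e v' f).
Proof.
move=> /andP[/dvdzP[y uv] /dvdzP[x uv']] /andP[/dvdzP[y' wz] /dvdzP[x' wz']].
apply/andP; split; apply/dvdzP; rewrite /exp_mul /shift.
  exists (y + (if e then -1 else 1) * y' + (if e && f then nb else 0)).
  by move: uv uv' wz wz'; have := N_nb; rewrite /shift; case: e f => -[] /=; lia.
exists (x + (if e then -1 else 1) * x').
by move: uv uv' wz wz'; have := N_na; rewrite /shift; case: e f => -[] /=; lia.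
Qed.

Lemma admissible_inv e u v : admissible e u v -> admissible e (exp_inv n u e) (exp_inv n v e).
Proof.
move=> /andP[/dvdzP[y uv] /dvdzP[x uv']]; apply/andP; split; apply/dvdzP; rewrite /exp_inv /shift.
  by exists (if e then y + nb else - y); move: uv uv'; have := N_nb; rewrite /shift; case: e; lia.
by exists (if e then x else - x); move: uv uv'; rewrite /shift; case: e; lia.
Qed.

Lemma Gset_mul g g' : Gset g -> Gset g' -> Gset (mmul g g').
Proof.
move=> [t [e [u [v [-> uv]]]]] [t' [f [u' [v' [-> uv']]]]].
rewrite mono_mul; exists (t (+) t'), (e (+) f).
case: t => /=; rewrite !dic_mul //; do 2 eexists; split=> //; apply: admissible_mul => //.
exact: admissible_swap.
Qed.

Lemma Gset_adj g : Gset g -> Gset (madj g).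
Proof.
move=> [t [e [u [v [-> uv]]]]]; rewrite mono_adj; exists t, e.
case: t => /=; rewrite !dic_conj // !dic_inv //; do 2 eexists; split=> //.
  by apply: admissible_swap; apply: admissible_inv.
exact: admissible_inv.
Qed.

Lemma Gset_mI : Gset (mI R).
Proof.
exists false, false, 0, 0; split; first by rewrite -(qone_dic R n).
by rewrite /admissible /shift subr0 addr0 !dvdz0.
Qed.

Lemma Gset_Mb c : Gset (Mb c) <-> Lset c.
Proof.
split=> [[[] [e [u [v [/mat2_entries [c0 cu cv _] uv]]]]] | Lc].
- move: cv; rewrite cu dic_inv // => /(dic_eqP _ n_gt0)[_ /dvdzP[w vu]].
  move: uv => /andP[/dvdzP[y uv] /dvdzP[x uv']]; apply/Lset_dic.
  move: vu uv uv'; rewrite /exp_inv /shift; case: e {cu} => vu uv uv'; apply/dvdzP.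
    by exists (y + w * nb); move: vu; rewrite N_nb; have := N_nb; lia.
  by exists (x - w * na); move: vu; rewrite N_na; have := N_na; lia.
- by case: (dic_neq0 (esym c0)).
case: Lc => [[z ->]|[z ->]]; [exists true, false | exists true, true];
  (do 2 eexists; split; first by rewrite /Mb dic_inv); apply/andP; split; apply/dvdzP;
  rewrite /exp_inv /shift ?N_na.
- by exists 0; lia.
- by exists z; lia.
- by exists z; lia.
- by exists (- na); lia.
Qed.

Lemma Gset_diag p q :
  Gset (diag2 p q) <-> exists e u v, [/\ p = dic u e, q = dic v e & admissible e u v].
Proof.
split=> [[[] [e [u [v [/mat2_entries [pu u0 _ qv] uv]]]]] | [e [u [v [-> -> uv]]]]].
- by case: (dic_neq0 (esym u0)).
- by exists e, u, v.
by exists false, e, u, v.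
Qed.

Lemma Gset_diagC p q : Gset (diag2 p q) -> Gset (diag2 q p).
Proof.
move=> /Gset_diag[e [u [v [-> -> uv]]]]; apply/Gset_diag.
by exists e, v, u; split=> //; apply: admissible_swap.
Qed.

Hypothesis coprime_ab : coprime a b.

Lemma admissible_diag1 u v : admissible false u v -> (2 * N %| v)%Z -> (2 * A * B %| u)%Z.
Proof.
move=> /andP[/dvdzP[y uv] /dvdzP[x uv']] /dvdzP[w vw]; rewrite /shift in uv uv'.
have u_A : u = (x + w * na) * (2 * A) by move: vw; rewrite N_na; lia.
have u_B : u = (y - w * nb) * (2 * B) by move: vw; rewrite N_nb; lia.
have : (B %| (x + w * na) * A)%Z.
  by apply/dvdzP; exists (y - w * nb); apply: (@mulIf _ 2) => //; lia.
rewrite Gauss_dvdzl; last by rewrite /coprimez /gcdz /= gcdnC.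
by move=> /dvdzP[z xz]; apply/dvdzP; exists z; rewrite u_A xz; ring.
Qed.

Lemma Gset_diag1 h : Gset (diag2 h (qone R)) <-> Hset h.
Proof.
split=> [/Gset_diag[e [u [v [-> v0 uv]]]] | [z ->]].
  move: v0 uv; rewrite (qone_dic R n) => /(dic_eqP _ n_gt0)[<- /dvdzP[w v0]] uv.
  have /dvdzP[z ->] : (2 * A * B %| u)%Z.
    by apply: (admissible_diag1 uv); apply/dvdzP; exists (- w); lia.
  by exists z.
apply/Gset_diag; exists false, (z * (2 * A * B)), 0; split=> //; first exact: qone_dic.
by apply/andP; split; apply/dvdzP; [exists (z * A) | exists (z * B)]; rewrite /shift; lia.
Qed.

Lemma Gset_diag2 h : Gset (diag2 (qone R) h) <-> Hset h.
Proof. by rewrite -Gset_diag1; split=> /Gset_diagC. Qed.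

Local Notation MbL := [set g | exists2 c, Lset c & g = Mb c].

Lemma Gset_sub_mgen_MbL : Gset `<=` mgen MbL.
Proof.
have MbL_gen c : Lset c -> mgen MbL (Mb c) by move=> Lc; apply: mgen_base; exists c.
have L0 e : Lset (dic 0 e) by apply/Lset_dic; case: e; rewrite dvdz0.
have LA x : Lset (dic (x * A) false) by apply/Lset_dic; rewrite dvdz_mull.
have LB y : Lset (dic (y * B) true) by apply/Lset_dic; rewrite dvdz_mull.
have diag_gen e u v : admissible e u v -> mgen MbL (diag2 (dic u e) (dic v e)).
  move=> /admissibleP[x [y [-> ->]]].
  have X : mgen MbL (diag2 (dic (x * A) false) (dic (- (x * A)) false)).
    by have := mgen_mul (MbL_gen _ (LA x)) (MbL_gen _ (L0 false)); rewrite Mb_dic_mul // subr0 sub0r.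
  have Y : mgen MbL (diag2 (dic (y * B) false) (dic (y * B) false)).
    by have := mgen_mul (MbL_gen _ (LB y)) (MbL_gen _ (L0 true)); rewrite Mb_dic_mul // subr0.
  have XY := mgen_mul X Y; rewrite diag_mul !dic_mul // /exp_mul /= !addr0 in XY.
  case: e; last by rewrite /shift addr0 [y * B - _]addrC.
  have J : mgen MbL (diag2 (dic N true) (dic 0 true)).
    have := mgen_mul (MbL_gen _ (L0 false)) (MbL_gen _ (L0 true)).
    by rewrite Mb_mul !dic_inv // !dic_mul // /exp_inv /exp_mul /= oppr0 !add0r !addr0.
  have := mgen_mul XY J; rewrite diag_mul !dic_mul // /exp_mul /= /shift.
  by rewrite !addr0 [_ - _]addrC.
move=> _ [[] [e [u [v [-> uv]]]]]; last exact: diag_gen.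
have := mgen_mul (MbL_gen _ (L0 false)) (diag_gen _ _ _ (admissible_swap uv)).
by rewrite Mb_diag dic_inv // !dic_mul // /exp_inv /exp_mul /= oppr0 !add0r !addr0.
Qed.

Lemma mgen_MbL : mgen MbL = Gset.
Proof.
apply/seteqP; split; last exact: Gset_sub_mgen_MbL.
apply: mgen_ind; [|exact: Gset_mI|exact: Gset_mul|exact: Gset_adj].
by move=> _ [c /Gset_Mb Gc ->].
Qed.

Lemma HL_eq : HL (Lab n a b) = Hset.
Proof.
by rewrite /HL Lab_eq mgen_MbL; apply/seteqP; split=> h /Gset_diag1.
Qed.

Lemma Ggrp_eq : Ggrp (Lab n a b) Hset = Gset.
Proof.
apply/seteqP; split.
  apply: mgen_ind; [|exact: Gset_mI|exact: Gset_mul|exact: Gset_adj].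
  move=> _ [[h Hh [->|->]]|[c Lc ->]]; [exact/Gset_diag1|exact/Gset_diag2|].
  by apply/Gset_Mb; rewrite -Lab_eq.
rewrite -mgen_MbL; apply: mgen_sub => _ [c Lc ->]; right; exists c => //.
by rewrite Lab_eq.
Qed.

Lemma base_group_eq : base_group (Lab n a b) = Gset.
Proof. by rewrite /base_group HL_eq Ggrp_eq. Qed.

Local Notation nab := (n %/ (a * b))%N.

Lemma n_nab : n = (nab * (a * b))%N.
Proof. by rewrite divnK // Gauss_dvd // a_dvd_n b_dvd_n. Qed.

Lemma nab_gt0 : (0 < nab)%N.
Proof. by move: n_gt0; rewrite {1}n_nab muln_gt0 => /andP[]. Qed.

Lemma Hset_qgen : Hset = qgen [set qpow (omega R n) (2 * (a * b))].
Proof.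
rewrite qpow_omega // qgen_dic_multiples // /Hset.
by have -> : Posz (2 * (a * b)) = 2 * A * B by lia.
Qed.

Lemma Ccyc_eq : Ccyc n nab = Hset.
Proof.
rewrite Hset_qgen /Ccyc; congr (qgen [set qpow _ _]).
by rewrite {1}n_nab mulnA [(2 * nab)%N]mulnC -mulnA mulKn // nab_gt0.
Qed.

Lemma GK_conditions_Hset : GK_conditions (Dic n) (Lab n a b) Hset.
Proof.
have HL h : Hset h -> Lset h.
  by move=> [z ->]; left; exists (z * 2 * B); congr (dic _ _); ring.
rewrite /GK_conditions Ggrp_eq Dic_eq // Lab_eq; split.
- by move=> _ [z ->]; do 2 eexists.
- move=> _ _ [l [e ->]] [z ->]; rewrite dic_inv // !dic_mul // /exp_mul /exp_inv addbF addbb.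
  by exists (if e then - z else z); case: e => /=; congr (dic _ _); ring.
- exact: HL.
- apply/seteqP; split=> [_ [c [_ [Lc [z ->] ->]]] | c Lc].
    case: Lc => [[w ->]|[w ->]]; rewrite dic_mul // /exp_mul /=.
      by left; exists (w + z * 2 * B); congr (dic _ _); ring.
    by right; exists (w - z * 2 * A); congr (dic _ _); ring.
  by exists c, (qone R); split=> //; [exists 0; rewrite mul0r (qone_dic R n) | rewrite qmulq1].
- by apply/seteqP; split=> c /Gset_Mb.
Qed.

Lemma na_gt0 : 0 < na.
Proof. by rewrite ltz_nat divn_gt0 ?(dvdn_gt0 n_gt0 a_dvd_n) // dvdn_leq. Qed.

Lemma nb_gt0 : 0 < nb.
Proof. by rewrite ltz_nat divn_gt0 ?(dvdn_gt0 n_gt0 b_dvd_n) // dvdn_leq. Qed.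

Lemma Gset_unitary g : Gset g -> unitary g.
Proof.
move=> [t [e [u [v [-> _]]]]].
by apply: unitary_mono; rewrite dic_conj // qmulVq //; exact: dic_neq0.
Qed.

Definition gelt t e x y : M := mono t (dic (x * A + y * B + shift e) e) (dic (y * B - x * A) e).

Lemma Gset_gelt g : Gset g <-> exists t e x y, g = gelt t e x y.
Proof.
split=> [[t [e [u [v [-> /admissibleP[x [y [-> ->]]]]]]]] | [t [e [x [y ->]]]]].
  by exists t, e, x, y.
exists t, e, (x * A + y * B + shift e), (y * B - x * A); split=> //.
by apply/admissibleP; exists x, y.
Qed.

Lemma gelt_shift t e x y k m : gelt t e (x + (k + 2 * m) * na) y = gelt t e x (y + k * nb).
Proof.
have eA : (x + (k + 2 * m) * na) * A = x * A + (k + 2 * m) * N by rewrite N_na; ring.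
have eB : (y + k * nb) * B = y * B + k * N by rewrite N_nb; ring.
rewrite /gelt eA eB; congr mono; apply: (eq_dic _ n_gt0); apply/dvdzP.
  by exists m; lia.
by exists (- (k + m)); lia.
Qed.

Lemma gelt_inj t e x y t' e' x' y' :
  0 <= x < 2 * na -> 0 <= x' < 2 * na -> 0 <= y < nb -> 0 <= y' < nb ->
  gelt t e x y = gelt t' e' x' y' -> [/\ t = t', e = e', x = x' & y = y'].
Proof.
move=> xr x'r yr y'r /(mono_eq_inj (@dic_neq0 _ _ _ _) (@dic_neq0 _ _ _ _))[<-].
move=> /(dic_eqP _ n_gt0)[<- /dvdzP[m1 e1]] /(dic_eqP _ n_gt0)[_ /dvdzP[m2 e2]].
have A0 : A != 0 by rewrite eqz_nat -lt0n (dvdn_gt0 n_gt0).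
have B0 : B != 0 by rewrite eqz_nat -lt0n (dvdn_gt0 n_gt0).
have yy : y = y'.
  have : (nb %| y - y')%Z.
    by rewrite -(dvdz_mul2r B0) -N_nb; apply/dvdzP; exists (m1 + m2); lia.
  by move=> /dvdz_small_eq0 yy; apply/eqP; rewrite -subr_eq0; apply/eqP/yy; lia.
have : (2 * na %| x - x')%Z.
  by rewrite -(dvdz_mul2r A0) -mulrA -N_na; apply/dvdzP; exists m1; lia.
by move=> /dvdz_small_eq0 xx; split=> //; apply/eqP; rewrite -subr_eq0; apply/eqP/xx; lia.
Qed.

Lemma gelt_reduce t e x y :
  exists (i : 'I_(2 * (n %/ a))) (j : 'I_(n %/ b)), gelt t e x y = gelt t e i j.
Proof.
have na0 := na_gt0; have nb0 := nb_gt0.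
set q := (y %/ nb)%Z; set m := ((x + q * na) %/ (2 * na))%Z.
have [i ix] : exists i : 'I_(2 * (n %/ a)), ((x + q * na) %% (2 * na))%Z = i%:Z.
  by apply: ord_of_int; rewrite PoszM modz_ge0 ?ltz_pmod ?pmulr_rgt0 // gt_eqF ?pmulr_rgt0.
have [j jy] : exists j : 'I_(n %/ b), (y %% nb)%Z = j%:Z.
  by apply: ord_of_int; rewrite modz_ge0 ?ltz_pmod // gt_eqF.
exists i, j; rewrite -ix -jy.
rewrite {1}(divz_eq y nb) -/q addrC -(gelt_shift _ _ _ _ _ 0).
rewrite (_ : x + _ = ((x + q * na) %% (2 * na))%Z + (0 + 2 * m) * na).
  by rewrite gelt_shift mul0r addr0.
by have := divz_eq (x + q * na) (2 * na); rewrite -/m; lia.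
Qed.

Lemma card_Gset : has_card Gset (8 * n ^ 2 %/ (a * b)).
Proof.
pose I := (bool * bool * 'I_(2 * (n %/ a)) * 'I_(n %/ b))%type.
have -> : (8 * n ^ 2 %/ (a * b))%N = #|{: I}|.
  rewrite !card_prod !card_ord card_bool.
  have a_gt0 := dvdn_gt0 n_gt0 a_dvd_n; have b_gt0 := dvdn_gt0 n_gt0 b_dvd_n.
  have := divnK a_dvd_n; have := divnK b_dvd_n.
  set a' := (n %/ a)%N; set b' := (n %/ b)%N => nb' na'.
  have -> : (8 * n ^ 2 = 8 * a' * b' * (a * b))%N by rewrite expnS expn1 -{1}na' -nb'; ring.
  by rewrite mulnK ?muln_gt0 ?a_gt0 //; ring.
apply: (has_card_fintype (f := fun p : I => let: (t, e, i, j) := p in gelt t e i j)).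
  move=> [[[t e] i] j] [[[t' e'] i'] j'] /gelt_inj.
  have ord_range (K : nat) (k : 'I_K) : 0 <= k%:Z < K%:Z by rewrite ltz_nat ltn_ord.
  rewrite /na /nb -[2 * _](PoszM 2) !ord_range => /(_ isT isT isT isT)[-> -> ii jj].
  have -> : i = i' by apply: ord_inj; lia.
  by have -> : j = j' by apply: ord_inj; lia.
move=> g; rewrite Gset_gelt; split=> [[t [e [x [y ->]]]] | [[[[t e] i] j] ->]].
  by have [i [j ->]] := gelt_reduce t e x y; exists (t, e, i, j).
by exists t, e, i%:Z, j%:Z.
Qed.

Lemma Gset_reflection : [set g | Gset g /\ reflection g] =
  @Mb R @` Lset `|` ((fun h => diag2 h (qone R)) @` (Hset `\ qone R)
                     `|` diag2 (qone R) @` (Hset `\ qone R)).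
Proof.
apply/seteqP; split=> g.
  move=> [Gg [_ [nI r1]]]; have [[] [e [u [v [gE _]]]]] := Gg; subst g.
    have vu : dic v e = qinv (dic u e).
      have vu1 := (rank1_antidiag_subI _ _).1 r1.
      have := qmulqV (@dic_neq0 R n u e).
      by move=> uuV; rewrite -(qmulq1 (dic v e)) -uuV qmulA vu1 qmul1q.
    left; exists (dic u e); last by rewrite /Mb vu.
    by apply/Gset_Mb; rewrite /Mb -vu; exact: Gg.
  right; case: ((rank1_diag_subI nI).1 r1) => [u1 | v1].
    right; exists (dic v e); last by rewrite u1.
    split; first by apply/Gset_diag2; rewrite -u1.
    by move=> v1; apply: nI; rewrite u1 v1.
  left; exists (dic u e); last by rewrite v1.
  split; first by apply/Gset_diag1; rewrite -v1.
  by move=> u1; apply: nI; rewrite u1 v1.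
case=> [[c Lc <-] | [[h [Hh h1] <-] | [h [Hh h1] <-]]].
- have Gc : Gset (Mb c) by apply/Gset_Mb.
  split=> //; split; first exact: Gset_unitary.
  split; first by move=> /mat2_entries[/esym/qone_neq0].
  apply/(rank1_antidiag_subI c (qinv c)); apply: qmulVq.
  by case: Lc => [[z ->]|[z ->]]; apply: dic_neq0.
- have Gh : Gset (diag2 h (qone R)) by apply/Gset_diag1.
  split=> //; split; first exact: Gset_unitary.
  have nI : diag2 h (qone R) <> mI R by move=> /mat2_entries[].
  by split=> //; apply/(rank1_diag_subI nI); right.
- have Gh : Gset (diag2 (qone R) h) by apply/Gset_diag2.
  split=> //; split; first exact: Gset_unitary.
  have nI : diag2 (qone R) h <> mI R by move=> /mat2_entries[].
  by split=> //; apply/(rank1_diag_subI nI); left.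
Qed.

Lemma card_Lset : has_card Lset (2 * (n %/ a) + 2 * (n %/ b)).
Proof.
apply: has_card_setU.
- by move=> _ [z ->] [z' /(dic_eqP _ n_gt0)[]].
- apply: has_card_dic_multiples => //; first by rewrite muln_gt0 /= -[(0 < _)%N]ltz_nat na_gt0.
  by rewrite PoszM N_na; ring.
- apply: has_card_dic_multiples => //; first by rewrite muln_gt0 /= -[(0 < _)%N]ltz_nat nb_gt0.
  by rewrite PoszM N_nb; ring.
Qed.

Lemma card_Hset : has_card Hset nab.
Proof.
apply: has_card_dic_multiples nab_gt0 _ => //.
by rewrite {1}n_nab !PoszM; ring.
Qed.

Lemma card_reflections : has_card [set g | Gset g /\ reflection g]
  (2 * n %/ (a * b) + 2 * n %/ a + 2 * n %/ b - 2).
Proof.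
have H1 : Hset (qone R) by exists 0; rewrite mul0r (qone_dic R n).
have Hn1 : has_card (Hset `\ qone R) nab.-1 by apply: has_card_setD1 H1 card_Hset.
rewrite Gset_reflection (_ : (_ - 2)%N = (2 * (n %/ a) + 2 * (n %/ b)) + (nab.-1 + nab.-1))%N.
  apply: has_card_setU.
  - by move=> _ [c Lc <-] [[h _ /mat2_entries[_ _ _ /qone_neq0]] | [h _ /mat2_entries[/qone_neq0]]].
  - by apply: has_card_image card_Lset => c c' /mat2_entries[].
  apply: has_card_setU.
  - by move=> _ [h [_ h1] <-] [h' _ /mat2_entries[/esym]].
  - by apply: has_card_image Hn1 => h h' /mat2_entries[].
  - by apply: has_card_image Hn1 => h h' /mat2_entries[].
have ab_n : (a * b %| n)%N by rewrite Gauss_dvd // a_dvd_n b_dvd_n.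
rewrite -!muln_divA // -!subn1; move: (n %/ a)%N (n %/ b)%N nab_gt0 => x y; lia.
Qed.

Lemma Lab_canonical : [set c | base_group (@Lab R n a b) (Mb c)] = Lab n a b.
Proof. by rewrite base_group_eq Lab_eq; apply/seteqP; split=> c /Gset_Mb. Qed.

End BaseGroup.

Lemma Lab_inj (R : realType) (n a b a' b' : nat) : (0 < n)%N ->
  (a %| n)%N -> (b %| n)%N -> (a' %| n)%N -> (b' %| n)%N ->
  @Lab R n a b = Lab n a' b' -> a = a' /\ b = b'.
Proof.
move=> n_gt0 an bn an' bn' LL.
have dvd_gens x y x' y' : (x %| n)%N -> (y %| n)%N -> (x' %| n)%N -> (y' %| n)%N ->
    @Lab R n x y = Lab n x' y' -> (x %| x')%N && (y %| y')%N.
  move=> xn yn x'n y'n L_eq.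
  have /(Lab_dic R n_gt0 xn yn) xx' : Lab n x y (dic R n x' false).
    by rewrite L_eq; apply/(Lab_dic R n_gt0 x'n y'n).
  have /(Lab_dic R n_gt0 xn yn) yy' : Lab n x y (dic R n y' true).
    by rewrite L_eq; apply/(Lab_dic R n_gt0 x'n y'n).
  by apply/andP; split; [exact: xx' | exact: yy'].
have /andP[aa' bb'] := dvd_gens _ _ _ _ an bn an' bn' LL.
have /andP[a'a b'b] := dvd_gens _ _ _ _ an' bn' an bn (esym LL).
by split; apply/eqP; rewrite eqn_dvd ?aa' ?a'a ?bb' ?b'b.
Qed.

Local Open Scope classical_set_scope.

Theorem theorem5p3 (R : realType) (n a b : nat) :
  (2 <= n)%N -> Omega n a b ->
  let L := @Lab R n a b in
  let G := base_group L in
  (HL L = qgen [set qpow (@omega R n) (2 * (a * b))]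
   /\ HL L = @Ccyc R n (n %/ (a * b))
   /\ has_card (HL L) (n %/ (a * b)))
  /\ (GK_conditions (@Dic R n) L (@Ccyc R n (n %/ (a * b)))
      /\ G = Ggrp L (@Ccyc R n (n %/ (a * b))))
  /\ has_card G (8 * n ^ 2 %/ (a * b))
  /\ has_card [set g | G g /\ reflection g]
       (2 * n %/ (a * b) + 2 * n %/ a + 2 * n %/ b - 2)
  /\ (forall a' b' : nat, Omega n a' b' -> (a, b) <> (a', b') ->
        G <> base_group (@Lab R n a' b')).
Proof.
move=> /ltnW n_gt0 /and5P[_ _ _ an /andP[bn cab]] L G.
split; [|split; [|split; [|split]]].
- by rewrite /L HL_eq // Ccyc_eq //; split; [exact: Hset_qgen | split=> //; exact: card_Hset].
- by rewrite /G /L base_group_eq // Ccyc_eq // Ggrp_eq //; split=> //; exact: GK_conditions_Hset.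
- by rewrite /G /L base_group_eq //; exact: card_Gset.
- by rewrite /G /L base_group_eq //; exact: card_reflections.
move=> a' b' /and5P[_ _ _ an' /andP[bn' cab']] ab' GG; apply: ab'.
have LL : @Lab R n a b = Lab n a' b'.
  by move: GG; rewrite /G /L => GG; rewrite -(Lab_canonical R n_gt0 an bn cab) GG Lab_canonical.
by have [-> ->] := Lab_inj n_gt0 an bn an' bn' LL.
Qed.
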